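(* Let $\Omega$ be a non-empty list of atoms and let $A,B$ be formulas with frontier $\Omega$. Whenever the joins in question exist, $A\vee_\Omega B=\varphi(\psi(A)\sqcup_\Omega\psi(B))$ and $\bot_\Omega=\varphi(0_\Omega)$, where $\vee_\Omega$ and $\bot_\Omega$ denote binary join and least element in $\mathrm{Frm}_\Omega$, and $\sqcup_\Omega$ and $0_\Omega$ denote binary join and least element in $\mathrm{Ctx}_\Omega$.
   Context: Formulas are built from atoms ($p,q,\dots$) by a binary product: every formula is an atom or $A\bullet B$. A context is a finite (possibly empty) list of formulas; commas denote concatenation. The frontier $\mathrm{fr}$ is the ordered list of atom occurrences ($\mathrm{fr}(p)=p$, $\mathrm{fr}(A\bullet B)=\mathrm{fr}(A),\mathrm{fr}(B)$; for contexts, concatenate). The sequent calculus has exactly four rules (no weakening, contraction or exchange): ($\bullet L$) from $A,B,\Delta\vdash C$ infer $A\bullet B,\Delta\vdash C$ (the product must be leftmost); ($\bullet R$) from $\Gamma\vdash A$ and $\Delta\vdash B$ infer $\Gamma,\Delta\vdash A\bullet B$; ($id$) $A\vdash A$; ($cut$) from $\Theta\vdash A$ and $\Gamma,A,\Delta\vdash B$ infer $\Gamma,\Theta,\Delta\vdash B$; derivable means conclusion of a finite derivation tree with no undischarged premises. The Tamari order on formulas is the least preorder with $(A\bullet B)\bullet C\le A\bullet(B\bullet C)$ and $A_1\le A_2$, $B_1\le B_2$ implying $A_1\bullet B_1\le A_2\bullet B_2$. The substitution order on contexts is the least relation $\le$ such that (1) $\Gamma\vdash A$ derivable implies $\Gamma\le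 A$ (one-element context); (2) $\cdot\le\cdot$; (3) $\Gamma_1\le\Gamma_2$ and $\Theta_1\le\Theta_2$ imply $(\Gamma_1,\Theta_1)\le(\Gamma_2,\Theta_2)$. $\mathrm{Frm}_\Omega$ is the poset of formulas with frontier $\Omega$ under the Tamari order; $\mathrm{Ctx}_\Omega$ is the poset of contexts with frontier $\Omega$ under the substitution order. $\varphi(A)=A$, $\varphi(\Gamma,A)=\varphi(\Gamma)\bullet A$ (left-associated product of a non-empty context); $\psi(p)=p$, $\psi(A\bullet B)=\psi(A),B$. *)

From Stdlib Require Import List.
Import ListNotations.

Inductive form : Type :=
| Atom : nat -> form
| Prod : form -> form -> form.

(* Contexts are finite lists of formulas; commas = list concatenation. *)
Definition ctx := list form.

Fixpoint fr (A : form) : list nat :=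
  match A with
  | Atom p => [p]
  | Prod A B => fr A ++ fr B
  end.

Definition frc (G : ctx) : list nat := flat_map fr G.

Inductive deriv : ctx -> form -> Prop :=
| d_prodL : forall A B D C, deriv (A :: B :: D) C -> deriv (Prod A B :: D) C
| d_prodR : forall G D A B, deriv G A -> deriv D B -> deriv (G ++ D) (Prod A B)
| d_id : forall A, deriv [A] A
| d_cut : forall Th A G D B,
    deriv Th A -> deriv (G ++ A :: D) B -> deriv (G ++ Th ++ D) B.

Inductive tam : form -> form -> Prop :=
| tam_refl : forall A, tam A A
| tam_trans : forall A B C, tam A B -> tam B C -> tam A C
| tam_assoc : forall A B C, tam (Prod (Prod A B) C) (Prod A (Prod B C))
| tam_mono : forall A1 A2 B1 B2, tam A1 A2 -> tam B1 B2 -> tam (Prod A1 B1) (Prod A2 B2).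

Inductive subst_le : ctx -> ctx -> Prop :=
| sl_deriv : forall G A, deriv G A -> subst_le G [A]
| sl_nil : subst_le [] []
| sl_app : forall G1 G2 T1 T2,
    subst_le G1 G2 -> subst_le T1 T2 -> subst_le (G1 ++ T1) (G2 ++ T2).

(* phi: left-associated product of a non-empty context.
   On the empty context it returns an (irrelevant) junk value; in the
   statement it is only applied to contexts with non-empty frontier. *)
Definition phi (G : ctx) : form :=
  match G with
  | [] => Atom 0
  | A :: G' => fold_left Prod G' A
  end.

Fixpoint psi (A : form) : ctx :=
  match A with
  | Atom p => [Atom p]
  | Prod A B => psi A ++ [B]
  end.

Definition is_join {T : Type} (le : T -> T -> Prop) (P : T -> Prop) (j a b : T) : Prop :=
  P j /\ le a j /\ le b j /\ (forall c, P c -> le a c -> le b c -> le j c).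

Definition is_least {T : Type} (le : T -> T -> Prop) (P : T -> Prop) (j : T) : Prop :=
  P j /\ (forall c, P c -> le j c).

Definition in_Frm (Om : list nat) (A : form) : Prop := fr A = Om.
Definition in_Ctx (Om : list nat) (G : ctx) : Prop := frc G = Om.

(** Proof idea: [phi] and [psi] are monotone for the Tamari and substitution
    orders and [phi (psi A) = A], so [phi] carries a join of [psi A] and
    [psi B] in [Ctx_Omega] to a join of [A] and [B] in [Frm_Omega], and likewise
    for least elements.  Since the Tamari order is antisymmetric, such joins
    are unique.  Monotonicity of [phi] rests on a derivable sequent [G |- A]
    satisfying [phi G <= A]; monotonicity of [psi] on transitivity of the
    substitution order, which is cut. *)

From Stdlib Require Import List Lia.
Import ListNotations.

Section JoinTransfer.

Variables (S T : Type) (leS : S -> S -> Prop) (leT : T -> T -> Prop).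
Variables (P : S -> Prop) (Q : T -> Prop) (f : S -> T) (g : T -> S).

Hypothesis f_mono : forall u v, leS u v -> leT (f u) (f v).
Hypothesis g_mono : forall x y, leT x y -> leS (g x) (g y).
Hypothesis gK : forall x, f (g x) = x.
Hypothesis f_in : forall u, P u -> Q (f u).
Hypothesis g_in : forall x, Q x -> P (g x).

Lemma retract_is_join u a b :
  is_join leS P u (g a) (g b) -> is_join leT Q (f u) a b.
Proof.
  intros (Pu & au & bu & u_min).
  repeat split.
  - now apply f_in.
  - rewrite <- (gK a); now apply f_mono.
  - rewrite <- (gK b); now apply f_mono.
  - intros c Qc ac bc.
    rewrite <- (gK c).
    apply f_mono, u_min; auto.
Qed.

Lemma retract_is_least u : is_least leS P u -> is_least leT Q (f u).
Proof.
  intros (Pu & u_min); split.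
  - now apply f_in.
  - intros c Qc; rewrite <- (gK c); now apply f_mono, u_min, g_in.
Qed.

End JoinTransfer.

Section Uniqueness.

Variables (T : Type) (le : T -> T -> Prop) (P : T -> Prop).
Hypothesis le_antisym : forall x y, le x y -> le y x -> x = y.

Lemma is_join_unique j j' a b : is_join le P j a b -> is_join le P j' a b -> j = j'.
Proof.
  intros (Pj & aj & bj & j_min) (Pj' & aj' & bj' & j'_min).
  apply le_antisym; auto.
Qed.

Lemma is_least_unique j j' : is_least le P j -> is_least le P j' -> j = j'.
Proof. intros (Pj & j_min) (Pj' & j'_min); apply le_antisym; auto. Qed.

End Uniqueness.

Fixpoint leaves (A : form) : nat :=
  match A with
  | Atom _ => 1
  | Prod A B => leaves A + leaves B
  end.

(* Sum over the products of the number of leaves of their right factor: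
   rewriting [(A * B) * C] into [A * (B * C)] adds [leaves C]. *)
Fixpoint weight (A : form) : nat :=
  match A with
  | Atom _ => 0
  | Prod A B => weight A + weight B + leaves B
  end.

Lemma leaves_pos A : 1 <= leaves A.
Proof. induction A; simpl; lia. Qed.

Lemma tam_leaves A B : tam A B -> leaves A = leaves B.
Proof. induction 1; simpl; lia. Qed.

Lemma tam_eq_or_weight_lt A B : tam A B -> A = B \/ weight A < weight B.
Proof.
  induction 1 as [A | A B C _ IH1 _ IH2 | A B C | A1 A2 B1 B2 _ IHA HB IHB].
  - now left.
  - destruct IH1 as [-> | lt1], IH2 as [-> | lt2]; auto; right; lia.
  - right; simpl; pose proof (leaves_pos C); lia.
  - apply tam_leaves in HB.
    destruct IHA as [-> | lt1], IHB as [-> | lt2]; auto; right; simpl; lia.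
Qed.

Lemma tam_antisym A B : tam A B -> tam B A -> A = B.
Proof.
  intros AB BA.
  destruct (tam_eq_or_weight_lt _ _ AB) as [| lt1]; auto.
  destruct (tam_eq_or_weight_lt _ _ BA) as [-> | lt2]; auto; lia.
Qed.

Lemma tam_fold_left L x y : tam x y -> tam (fold_left Prod L x) (fold_left Prod L y).
Proof.
  revert x y; induction L; intros x y xy; simpl; auto.
  apply IHL, tam_mono; auto using tam_refl.
Qed.

Lemma phi_app G D : G <> [] -> phi (G ++ D) = fold_left Prod D (phi G).
Proof. destruct G; [congruence |]; intros _; apply fold_left_app. Qed.

Lemma phi_snoc G b : G <> [] -> phi (G ++ [b]) = Prod (phi G) b.
Proof. apply phi_app. Qed.

Lemma tam_fold_left_prod L x : L <> [] -> tam (fold_left Prod L x) (Prod x (phi L)).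
Proof.
  induction L as [| a L IHL] using rev_ind; [congruence |]; intros _.
  rewrite fold_left_app; simpl.
  destruct L as [| b L]; [apply tam_refl |].
  rewrite phi_snoc by congruence.
  eapply tam_trans; [apply tam_mono; [apply IHL; congruence | apply tam_refl] |].
  apply tam_assoc.
Qed.

Lemma deriv_nonempty G A : deriv G A -> G <> [].
Proof.
  induction 1; try congruence.
  - destruct G; simpl; congruence.
  - destruct G, Th; simpl; congruence.
Qed.

Lemma deriv_tam_phi G A : deriv G A -> tam (phi G) A.
Proof.
  induction 1 as [A B D C _ IH | G D A B HG IHG HD IHD | A
                 | Th A G D B HTh IHTh _ IH].
  - exact IH.
  - rewrite phi_app by exact (deriv_nonempty _ _ HG).
    eapply tam_trans; [apply tam_fold_left_prod, (deriv_nonempty _ _ HD) |].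
    now apply tam_mono.
  - apply tam_refl.
  - eapply tam_trans; [| exact IH].
    pose proof (deriv_nonempty _ _ HTh) as Th_ne.
    destruct G as [| g G]; simpl.
    + rewrite phi_app by exact Th_ne; now apply tam_fold_left.
    + rewrite !fold_left_app; simpl; apply tam_fold_left.
      eapply tam_trans; [apply tam_fold_left_prod, Th_ne |].
      apply tam_mono; [apply tam_refl | exact IHTh].
Qed.

Lemma tam_deriv A B : tam A B -> deriv [A] B.
Proof.
  induction 1 as [A | A B C _ AB _ BC | A B C | A1 A2 B1 B2 _ IHA _ IHB].
  - apply d_id.
  - exact (d_cut [A] B [] [] C AB BC).
  - do 2 apply d_prodL.
    apply (d_prodR [A] ([B] ++ [C])); [| apply (d_prodR [B] [C])]; apply d_id.
  - apply d_prodL, (d_prodR [A1] [B1]); assumption.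
Qed.

Lemma subst_le_refl G : subst_le G G.
Proof.
  induction G as [| a G IH]; [apply sl_nil |].
  apply (sl_app [a] [a]); [apply sl_deriv, d_id | exact IH].
Qed.

Lemma subst_le_concat G D : subst_le G D <-> exists Gs, G = concat Gs /\ Forall2 deriv Gs D.
Proof.
  split.
  - induction 1 as [G A HA | | G1 G2 T1 T2 _ [Gs1 [-> H1]] _ [Gs2 [-> H2]]].
    + exists [G]; simpl; rewrite app_nil_r; auto.
    + exists []; auto.
    + exists (Gs1 ++ Gs2); rewrite concat_app; auto using Forall2_app.
  - intros [Gs [-> HGs]].
    induction HGs as [| g A Gs D HA _ IH]; [apply sl_nil |].
    apply (sl_app g [A]); [apply sl_deriv |]; assumption.
Qed.

Lemma subst_le_app_inv_r G D1 D2 : subst_le G (D1 ++ D2) ->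
  exists G1 G2, G = G1 ++ G2 /\ subst_le G1 D1 /\ subst_le G2 D2.
Proof.
  intros [Gs [-> HGs]]%subst_le_concat.
  destruct (Forall2_app_inv_r _ _ HGs) as (Gs1 & Gs2 & H1 & H2 & ->).
  exists (concat Gs1), (concat Gs2).
  rewrite concat_app; split; [reflexivity |].
  split; apply subst_le_concat; eauto.
Qed.

Lemma subst_le_cut G D : subst_le G D ->
  forall L R A, deriv (L ++ D ++ R) A -> deriv (L ++ G ++ R) A.
Proof.
  induction 1 as [G A' HA' | | G1 G2 T1 T2 _ IH1 _ IH2]; intros L R A HD; auto.
  - exact (d_cut _ _ _ _ _ HA' HD).
  - rewrite <- app_assoc, app_assoc.
    apply IH2; rewrite <- app_assoc.
    apply IH1; rewrite <- app_assoc in HD; exact HD.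
Qed.

Lemma subst_le_trans G D E : subst_le G D -> subst_le D E -> subst_le G E.
Proof.
  intros GD DE; revert G GD.
  induction DE as [D A HA | | D1 E1 D2 E2 _ IH1 _ IH2]; intros G GD; auto.
  - apply sl_deriv.
    pose proof (subst_le_cut _ _ GD [] [] A) as cut.
    simpl in cut; rewrite !app_nil_r in cut; auto.
  - destruct (subst_le_app_inv_r _ _ _ GD) as (G1 & G2 & -> & GD1 & GD2).
    apply sl_app; auto.
Qed.

Lemma tam_fold_left_subst_le G D x y : subst_le G D -> tam x y ->
  tam (fold_left Prod G x) (fold_left Prod D y).
Proof.
  intros GD; revert x y.
  induction GD as [G A HA | | G1 G2 T1 T2 _ IH1 _ IH2]; intros x y xy; simpl; auto.
  - eapply tam_trans; [apply tam_fold_left_prod, (deriv_nonempty _ _ HA) |].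
    apply tam_mono; [exact xy | now apply deriv_tam_phi].
  - rewrite !fold_left_app; auto.
Qed.

Lemma phi_mono G D : subst_le G D -> tam (phi G) (phi D).
Proof.
  intros [Gs [-> HGs]]%subst_le_concat.
  destruct HGs as [| g A Gs D HA HGs]; [apply tam_refl |]; simpl concat.
  rewrite phi_app by exact (deriv_nonempty _ _ HA).
  apply tam_fold_left_subst_le.
  - apply subst_le_concat; eauto.
  - now apply deriv_tam_phi.
Qed.

Lemma psi_mono A B : tam A B -> subst_le (psi A) (psi B).
Proof.
  induction 1 as [A | A B C _ IH1 _ IH2 | A B C | A1 A2 B1 B2 _ IHA HB _]; simpl.
  - apply subst_le_refl.
  - eapply subst_le_trans; eauto.
  - rewrite <- app_assoc; apply sl_app; [apply subst_le_refl |].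
    apply sl_deriv, (d_prodR [B] [C]); apply d_id.
  - apply sl_app; [exact IHA |]; now apply sl_deriv, tam_deriv.
Qed.

Lemma psi_nonempty A : psi A <> [].
Proof. destruct A; simpl; [congruence |]; now destruct (psi A1). Qed.

Lemma phi_psi A : phi (psi A) = A.
Proof.
  induction A as [p | A IHA B _]; simpl; auto.
  now rewrite phi_snoc, IHA by apply psi_nonempty.
Qed.

Lemma frc_app G D : frc (G ++ D) = frc G ++ frc D.
Proof. apply flat_map_app. Qed.

Lemma frc_psi A : frc (psi A) = fr A.
Proof.
  induction A as [p | A IHA B _]; simpl; [reflexivity |].
  rewrite frc_app, IHA; simpl; now rewrite app_nil_r.
Qed.

Lemma fr_fold_left L x : fr (fold_left Prod L x) = fr x ++ frc L.
Proof.
  revert x; induction L as [| a L IH]; intros x; simpl; [now rewrite app_nil_r |].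
  now rewrite IH, app_assoc.
Qed.

Lemma fr_phi G : G <> [] -> fr (phi G) = frc G.
Proof. destruct G; [congruence |]; intros _; apply fr_fold_left. Qed.

Theorem lemma2p9 (Om : list nat) (A B : form) :
  Om <> [] -> fr A = Om -> fr B = Om ->
  (forall (J : form) (G : ctx),
      is_join tam (in_Frm Om) J A B ->
      is_join subst_le (in_Ctx Om) G (psi A) (psi B) ->
      J = phi G) /\
  (forall (J : form) (G : ctx),
      is_least tam (in_Frm Om) J ->
      is_least subst_le (in_Ctx Om) G ->
      J = phi G).
Proof.
  intros Om_ne _ _.
  assert (phi_in : forall G, in_Ctx Om G -> in_Frm Om (phi G)).
  { intros [| g G] HG; [now unfold in_Ctx in HG; subst |].
    unfold in_Frm; now rewrite fr_phi. }
  assert (psi_in : forall J, in_Frm Om J -> in_Ctx Om (psi J)).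
  { intros J HJ; unfold in_Ctx; now rewrite frc_psi. }
  split.
  - intros J G HJ HG.
    apply (is_join_unique _ _ _ tam_antisym _ _ _ _ HJ).
    exact (retract_is_join _ _ _ _ _ _ _ _ phi_mono psi_mono phi_psi phi_in psi_in
             _ _ _ HG).
  - intros J G HJ HG.
    apply (is_least_unique _ _ _ tam_antisym _ _ HJ).
    exact (retract_is_least _ _ _ _ _ _ _ _ phi_mono phi_psi phi_in psi_in _ HG).
Qed.
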